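(* Let $S$ be a semigroup such that $E(S)$ is a semilattice. Then the $\mathcal{L}^*$-classes of idempotents form a meet semilattice under the partial order on $S/\mathcal{L}^*$ induced by $\leq_{\mathcal{L}^*}$, and for all $e,f\in E(S)$ we have $L^*_e\wedge L^*_f=L^*_{ef}$.
   Context: On $S$, $a\leq_{\mathcal{L}^*}b$ iff for all $x,y\in S^1$, $bx=by$ implies $ax=ay$; $\mathcal{L}^*$ is the associated equivalence ($a\,\mathcal{L}^*\,b$ iff for all $x,y\in S^1$, $ax=ay\Leftrightarrow bx=by$), and $L^*_a$ denotes the $\mathcal{L}^*$-class of $a$. $E(S)$ is the set of idempotents; it is a semilattice when idempotents commute. *)

(* Plain Rocq: a semigroup is a carrier type S with an associative
   binary operation [mul].  S^1 = S with an adjoined identity is modelled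
   as [option S], [None] being the adjoined identity 1. *)

Definition mul1 {S : Type} (mul : S -> S -> S) (a : S) (x : option S) : S :=
  match x with
  | None => a
  | Some y => mul a y
  end.

Definition leLstar {S : Type} (mul : S -> S -> S) (a b : S) : Prop :=
  forall x y : option S, mul1 mul b x = mul1 mul b y -> mul1 mul a x = mul1 mul a y.

Definition Lstar {S : Type} (mul : S -> S -> S) (a b : S) : Prop :=
  forall x y : option S, mul1 mul a x = mul1 mul a y <-> mul1 mul b x = mul1 mul b y.

Definition idempotent {S : Type} (mul : S -> S -> S) (e : S) : Prop :=
  mul e e = e.

Definition associative_op {S : Type} (mul : S -> S -> S) : Prop :=
  forall a b c : S, mul a (mul b c) = mul (mul a b) c.

(* E(S) is a semilattice: idempotents commute. *)
Definition idempotents_commute {S : Type} (mul : S -> S -> S) : Prop :=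
  forall e f : S, idempotent mul e -> idempotent mul f -> mul e f = mul f e.


(* Left multiples move down, since (ab)x = a(bx) makes every equation
   b x = b y an equation (ab) x = (ab) y; and below an idempotent e the
   relation is just g e = g (test with x = e, y = 1).  Hence for commuting
   idempotents ef = fe lies below e and f, and any g below both
   satisfies g (ef) = (ge) f = g, so it lies below ef. *)

Section LstarOrder.

Context {S : Type} (mul : S -> S -> S).

Lemma leLstar_refl (a : S) : leLstar mul a a.
Proof. intros x y H; exact H. Qed.

Lemma leLstar_trans (a b c : S) :
  leLstar mul a b -> leLstar mul b c -> leLstar mul a c.
Proof. intros Hab Hbc x y H; apply Hab, Hbc, H. Qed.

Lemma Lstar_iff_leLstar (a b : S) :
  Lstar mul a b <-> leLstar mul a b /\ leLstar mul b a.
Proof.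
  split.
  - intros H; split; intros x y; apply H.
  - intros [Hab Hba] x y; split; [apply Hba | apply Hab].
Qed.

Hypothesis mulA : associative_op mul.

Lemma mul1A (a b : S) (x : option S) :
  mul1 mul (mul a b) x = mul a (mul1 mul b x).
Proof. destruct x; simpl; [symmetry; apply mulA | reflexivity]. Qed.

Lemma idempotent_mul (e f : S) :
  idempotent mul e -> idempotent mul f -> mul e f = mul f e ->
  idempotent mul (mul e f).
Proof.
  intros He Hf Hef; unfold idempotent.
  rewrite <- mulA, (mulA f e f), <- Hef, <- mulA, Hf, mulA, He.
  reflexivity.
Qed.

Lemma leLstar_mull (a b : S) : leLstar mul (mul a b) b.
Proof. intros x y H; rewrite !mul1A, H; reflexivity. Qed.

Lemma leLstar_idempotentE (g e : S) :
  idempotent mul e -> leLstar mul g e <-> mul g e = g.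
Proof.
  intros He; split.
  - intros Hge; apply (Hge (Some e) None); exact He.
  - intros Hg; rewrite <- Hg; apply leLstar_mull.
Qed.

End LstarOrder.

Theorem lemma4p3 (S : Type) (mul : S -> S -> S)
    (Hassoc : associative_op mul) (HE : idempotents_commute mul) :
  (* <=_{L*} is a preorder whose associated equivalence is L*, so it induces
     a partial order on S/L* *)
  (forall a, leLstar mul a a) /\
  (forall a b c, leLstar mul a b -> leLstar mul b c -> leLstar mul a c) /\
  (forall a b, Lstar mul a b <-> (leLstar mul a b /\ leLstar mul b a)) /\
  (* for idempotents e, f: ef is idempotent and L*_{ef} is the meet of
     L*_e and L*_f among the L*-classes of idempotents *)
  (forall e f : S, idempotent mul e -> idempotent mul f ->
     idempotent mul (mul e f) /\
     leLstar mul (mul e f) e /\ leLstar mul (mul e f) f /\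
     (forall g : S, idempotent mul g ->
        leLstar mul g e -> leLstar mul g f -> leLstar mul g (mul e f))).
Proof.
  split; [exact (leLstar_refl mul) |].
  split; [exact (leLstar_trans mul) |].
  split; [exact (Lstar_iff_leLstar mul) |].
  intros e f He Hf.
  assert (Hef : mul e f = mul f e) by (apply HE; assumption).
  assert (Hidem : idempotent mul (mul e f))
    by exact (idempotent_mul mul Hassoc e f He Hf Hef).
  split; [exact Hidem |].
  split; [rewrite Hef; apply (leLstar_mull mul Hassoc) |].
  split; [apply (leLstar_mull mul Hassoc) |].
  intros g _ Hge Hgf.
  apply (leLstar_idempotentE mul Hassoc g (mul e f) Hidem).
  apply (leLstar_idempotentE mul Hassoc g e He) in Hge.
  apply (leLstar_idempotentE mul Hassoc g f Hf) in Hgf.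
  rewrite Hassoc, Hge, Hgf; reflexivity.
Qed.
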